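(* Let $N$ be a model and $A\subseteq N$, and let $N^+=(N,U_1,\dots,U_k)$ be an expansion of $N$ by finitely many unary predicates. Then $\mathrm{rtp}(N^+,A)\le\beth_{\omega+1}(\mathrm{rtp}(N,A))$.
   Context: For a structure $N$ and $A\subseteq N$, $\mathrm{rtp}(N,A)$ is the number of complete types over $A$ (in the language of $N$) realized by tuples in $(N\setminus A)^{<\omega}$. *)

From mathcomp Require Import all_boot.
Set Implicit Arguments.
Unset Strict Implicit.
Unset Printing Implicit Defensive.

Record language := Language {
  Fsym : Type;
  Rsym : Type;
  farity : Fsym -> nat;
  rarity : Rsym -> nat }.

(* Terms and formulas of L with parameters from P, in the free variables
   x_0, ..., x_{n-1} (indexed by 'I_n).  Quantifiers bind the new last
   variable x_n. *)
Section Syntax.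
Variables (L : language) (P : Type).

Inductive term (n : nat) : Type :=
| TVar : 'I_n -> term n
| TPar : P -> term n
| TApp : forall f : Fsym L, ('I_(farity f) -> term n) -> term n.

Inductive formula : nat -> Type :=
| FEq n : term n -> term n -> formula n
| FRel n (r : Rsym L) : ('I_(rarity r) -> term n) -> formula n
| FNeg n : formula n -> formula n
| FAnd n : formula n -> formula n -> formula n
| FEx n : formula n.+1 -> formula n.
End Syntax.

Record structure (L : language) (M : Type) := Structure {
  sfun : forall f : Fsym L, ('I_(farity f) -> M) -> M;
  srel : forall r : Rsym L, ('I_(rarity r) -> M) -> Prop }.

Definition ext_env (M : Type) n (e : 'I_n -> M) (x : M) : 'I_n.+1 -> M :=
  fun i => match unlift ord_max i with Some j => e j | None => x end.

Section Semantics.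
Variables (L : language) (M : Type) (N : structure L M) (P : Type) (par : P -> M).

Fixpoint eval_term n (e : 'I_n -> M) (t : term L P n) : M :=
  match t with
  | TVar i => e i
  | TPar p => par p
  | TApp f args => sfun N (fun i => eval_term e (args i))
  end.

Fixpoint sat n (phi : formula L P n) : ('I_n -> M) -> Prop :=
  match phi in formula _ _ m return ('I_m -> M) -> Prop with
  | FEq m t1 t2 => fun e => eval_term e t1 = eval_term e t2
  | FRel m r args => fun e => srel N (fun i => eval_term e (args i))
  | FNeg m psi => fun e => ~ sat psi e
  | FAnd m psi chi => fun e => sat psi e /\ sat chi e
  | FEx m psi => fun e => exists x : M, sat psi (ext_env e x)
  end.
End Semantics.

Definition expand_lang (L : language) (k : nat) : language :=
  @Language (Fsym L) (Rsym L + 'I_k) (@farity L)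
    (fun r : Rsym L + 'I_k => match r with inl r' => rarity r' | inr _ => 1 end).

Definition expand_struct (L : language) (M : Type) (N : structure L M)
    (k : nat) (U : 'I_k -> M -> Prop) : structure (expand_lang L k) M :=
  @Structure (expand_lang L k) M (@sfun L M N)
    (fun r => match r return ('I_(@rarity (expand_lang L k) r) -> M) -> Prop with
              | inl r' => @srel L M N r'
              | inr i => fun a => U i (a ord0)
              end).

(* L(A)-formulas: parameters are elements of A. *)
Definition subA (M : Type) (A : M -> Prop) := {x : M | A x}.

Definition tp (L : language) (M : Type) (N : structure L M) (A : M -> Prop)
    n (a : 'I_n -> M) : formula L (subA A) n -> Prop :=
  fun phi => sat N (fun p : subA A => proj1_sig p) phi a.

(* the set of complete types over A realized by tuples from N \ A
   (types of tuples of different lengths are distinguished by the length);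
   rtp(N, A) is the cardinality of this type *)
Definition realized_types (L : language) (M : Type) (N : structure L M)
    (A : M -> Prop) :=
  { t : {n : nat & formula L (subA A) n -> Prop} |
    exists n (a : 'I_n -> M), (forall i, ~ A (a i)) /\
      t = existT (fun m => formula L (subA A) m -> Prop) n (@tp L M N A n a) }.

(* iterpow n T has cardinality beth_n(|T|) *)
Fixpoint iterpow (n : nat) (T : Type) : Type :=
  match n with 0 => T | n'.+1 => iterpow n' T -> Prop end.

(* {n & iterpow n T} has cardinality sum_n beth_n(|T|) = beth_omega(|T|),
   so beth_omega1 T has cardinality beth_{omega+1}(|T|). *)
Definition beth_omega1 (T : Type) : Type := {n : nat & iterpow n T} -> Prop.

Definition card_le (X Y : Type) : Prop := exists f : X -> Y, injective f.

(* Play Ehrenfeucht-Fraisse games over A whose moves are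
   restricted to elements outside A: tuples e1, e2 are m-equivalent
   ([bf m e1 e2]) when they have the same L(A)-type, the same colours
   (U-memberships) coordinatewise, and, for m > 0, every one-point extension
   of either side by an element outside A is matched by an (m-1)-equivalent
   extension of the other side.  Extensions by parameters from A preserve
   m-equivalence for free, so by induction on formulas every
   L^+(A)-formula is preserved by m-equivalence for some m [bf_invariant].
   Next, the m-equivalence class of a tuple outside A is coded by an element
   [code m e] of the m+2-fold power set of T = realized_types N A: at level 0
   the code records the L(A)-type of e (as a subset of T) and its colours
   (as a set of lengths of types), and level m+1 is the set of codes of the
   one-point extensions [code_bf].  Sending an L^+(A)-type to the set of all
   codes of a representing tuple is then an injection into
   P(sum_n beth_n(|T|)) = beth_{omega+1}(|T|). *)
From mathcomp Require Import all_boot.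
From Stdlib Require Import PeanoNat Classical IndefiniteDescription
  FunctionalExtensionality PropExtensionality ProofIrrelevance Eqdep_dec.
Set Implicit Arguments.
Unset Strict Implicit.
Unset Printing Implicit Defensive.

Section Environments.
Variable M : Type.

Lemma ext_env_lift n (e : 'I_n -> M) x j : ext_env e x (lift ord_max j) = e j.
Proof. by rewrite /ext_env liftK. Qed.

Lemma ext_env_max n (e : 'I_n -> M) x : ext_env e x ord_max = x.
Proof. by rewrite /ext_env unlift_none. Qed.

Lemma ext_env_drop n (e : 'I_n -> M) x : ext_env e x \o lift ord_max = e.
Proof. by apply: functional_extensionality => j; rewrite /= ext_env_lift. Qed.

Definition ren_up n n' (s : 'I_n -> 'I_n') (i : 'I_n.+1) : 'I_n'.+1 :=
  if unlift ord_max i is Some j then lift ord_max (s j) else ord_max.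

Lemma ext_env_ren n n' (s : 'I_n -> 'I_n') (e : 'I_n' -> M) x :
  ext_env e x \o ren_up s = ext_env (e \o s) x.
Proof.
apply: functional_extensionality => i /=; rewrite /ren_up.
by case: unliftP => [j ->|->]; rewrite ?ext_env_lift ?ext_env_max.
Qed.

Definition swap_last n (i : 'I_n.+2) : 'I_n.+2 :=
  match unlift ord_max i with
  | None => lift ord_max ord_max
  | Some j => if unlift ord_max j is Some j' then lift ord_max (lift ord_max j')
              else ord_max
  end.

Lemma ext_env_swap n (e : 'I_n -> M) x a :
  ext_env (ext_env e x) a \o @swap_last n = ext_env (ext_env e a) x.
Proof.
apply: functional_extensionality => i /=; rewrite /swap_last.
case: unliftP => [j ->|->]; last by rewrite ext_env_lift !ext_env_max.
by case: unliftP => [j' ->|->]; rewrite ?ext_env_lift ?ext_env_max.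
Qed.
End Environments.

Section Renaming.
Variables (L : language) (P : Type).

Fixpoint term_ren n n' (s : 'I_n -> 'I_n') (t : term L P n) : term L P n' :=
  match t with
  | TVar i => TVar L P (s i)
  | TPar p => TPar L n' p
  | TApp f args => TApp (fun i => term_ren s (args i))
  end.

Fixpoint formula_ren n (phi : formula L P n) :
    forall n', ('I_n -> 'I_n') -> formula L P n' :=
  match phi in formula _ _ m return forall n', ('I_m -> 'I_n') -> formula L P n' with
  | FEq _ t1 t2 => fun _ s => FEq (term_ren s t1) (term_ren s t2)
  | FRel _ r args => fun _ s => FRel (fun i => term_ren s (args i))
  | FNeg _ psi => fun _ s => FNeg (formula_ren psi s)
  | FAnd _ psi chi => fun _ s => FAnd (formula_ren psi s) (formula_ren chi s)
  | FEx _ psi => fun _ s => FEx (formula_ren psi (ren_up s))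
  end.

Variables (M : Type) (N : structure L M) (par : P -> M).

Lemma eval_term_ren n n' (s : 'I_n -> 'I_n') (e : 'I_n' -> M) t :
  eval_term N par e (term_ren s t) = eval_term N par (e \o s) t.
Proof.
elim: t => //= f args IH; congr (sfun N); exact: functional_extensionality.
Qed.

Lemma sat_formula_ren n (phi : formula L P n) n' (s : 'I_n -> 'I_n') (e : 'I_n' -> M) :
  sat N par (formula_ren phi s) e <-> sat N par phi (e \o s).
Proof.
elim: phi n' s e => {}n.
- by move=> t1 t2 n' s e /=; rewrite !eval_term_ren.
- move=> r args n' s e /=.
  suff -> : (fun i => eval_term N par e (term_ren s (args i))) =
            (fun i => eval_term N par (e \o s) (args i)) by [].
  by apply: functional_extensionality => i; rewrite eval_term_ren.
- by move=> psi IH n' s e /=; rewrite IH.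
- by move=> psi IH1 chi IH2 n' s e /=; rewrite IH1 IH2.
- move=> psi IH n' s e /=; split=> -[x Hx]; exists x.
    by move/IH: Hx; rewrite ext_env_ren.
  by apply/IH; rewrite ext_env_ren.
Qed.
End Renaming.

Section BackAndForth.
Variables (L : language) (M : Type) (N : structure L M) (A : M -> Prop)
          (k : nat) (U : 'I_k -> M -> Prop).

Local Notation Nplus := (expand_struct N U).

Definition parA : subA A -> M := fun p => proj1_sig p.

Definition same_base n (e1 e2 : 'I_n -> M) : Prop :=
  (forall phi : formula L (subA A) n, sat N parA phi e1 <-> sat N parA phi e2) /\
  (forall i j, U j (e1 i) <-> U j (e2 i)).

Definition forth n (R : ('I_n.+1 -> M) -> ('I_n.+1 -> M) -> Prop)
    (e1 e2 : 'I_n -> M) : Prop :=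
  forall x, ~ A x -> exists2 y, ~ A y & R (ext_env e1 x) (ext_env e2 y).

Fixpoint bf m n (e1 e2 : 'I_n -> M) : Prop :=
  same_base e1 e2 /\
  if m is m'.+1 then forth (@bf m' n.+1) e1 e2 /\
                     forth (fun f g => @bf m' n.+1 g f) e2 e1
  else True.

Lemma forth_map n n' (R : ('I_n.+1 -> M) -> ('I_n.+1 -> M) -> Prop)
    (R' : ('I_n'.+1 -> M) -> ('I_n'.+1 -> M) -> Prop) e1 e2 e1' e2' :
  (forall x y, R (ext_env e1 x) (ext_env e2 y) -> R' (ext_env e1' x) (ext_env e2' y)) ->
  forth R e1 e2 -> forth R' e1' e2'.
Proof. by move=> HR H x /H [y Hy /HR]; exists y. Qed.

Lemma bf_base m n (e1 e2 : 'I_n -> M) : bf m e1 e2 -> same_base e1 e2.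
Proof. by case: m => [|m] []. Qed.

Lemma same_base_sym n (e1 e2 : 'I_n -> M) : same_base e1 e2 -> same_base e2 e1.
Proof. by case=> H1 H2; split=> [phi|i j]; [rewrite H1|rewrite H2]. Qed.

Lemma bf_sym m n (e1 e2 : 'I_n -> M) : bf m e1 e2 -> bf m e2 e1.
Proof.
elim: m n e1 e2 => [|m IH] n e1 e2 [/same_base_sym Hb H]; split=> //.
case: H => Hf Hk; split; [apply: forth_map Hk | apply: forth_map Hf];
  by move=> x y /IH.
Qed.

Lemma bf_mono m n (e1 e2 : 'I_n -> M) : bf m.+1 e1 e2 -> bf m e1 e2.
Proof.
elim: m n e1 e2 => [|m IH] n e1 e2 [Hb [Hf Hk]]; split=> //.
by split; [apply: forth_map Hf | apply: forth_map Hk] => x y /IH.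
Qed.

Lemma bf_le m m' n (e1 e2 : 'I_n -> M) : m <= m' -> bf m' e1 e2 -> bf m e1 e2.
Proof. by move/subnK <-; elim: (m' - m) => //= d IH /bf_mono. Qed.

Lemma same_base_ren n n' (s : 'I_n -> 'I_n') (e1 e2 : 'I_n' -> M) :
  same_base e1 e2 -> same_base (e1 \o s) (e2 \o s).
Proof.
case=> H1 H2; split=> [phi|i j]; last exact: H2.
by rewrite -!(sat_formula_ren N parA phi s) H1.
Qed.

Lemma bf_ren m n n' (s : 'I_n -> 'I_n') (e1 e2 : 'I_n' -> M) :
  bf m e1 e2 -> bf m (e1 \o s) (e2 \o s).
Proof.
elim: m n n' s e1 e2 => [|m IH] n n' s e1 e2 [/(same_base_ren s) Hb H];
  split=> //.
case: H => Hf Hk; split; [apply: forth_map Hf | apply: forth_map Hk];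
  by move=> x y /(IH _ _ (ren_up s)); rewrite !ext_env_ren.
Qed.

(* Adjoining a parameter a from A is definable over A, hence harmless. *)
Lemma same_base_param n (e1 e2 : 'I_n -> M) a : A a ->
  same_base e1 e2 -> same_base (ext_env e1 a) (ext_env e2 a).
Proof.
move=> Ha [H1 H2]; split=> [phi|i j].
  pose chi := FEx (FAnd (FEq (TVar L (subA A) ord_max)
                             (TPar L n.+1 (exist _ a Ha))) phi).
  have Hchi (e : 'I_n -> M) : sat N parA chi e <-> sat N parA phi (ext_env e a).
    split=> [[x []]|Hs]; last by exists a; rewrite /= ext_env_max.
    by rewrite /= ext_env_max => ->.
  by rewrite -!Hchi H1.
by case: (unliftP ord_max i) => [i' ->|->]; rewrite ?ext_env_lift ?ext_env_max.
Qed.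

Lemma bf_param m n (e1 e2 : 'I_n -> M) a : A a ->
  bf m e1 e2 -> bf m (ext_env e1 a) (ext_env e2 a).
Proof.
elim: m n e1 e2 => [|m IH] n e1 e2 Ha [/(same_base_param Ha) Hb H];
  split=> //.
case: H => Hf Hk; split; [apply: forth_map Hf | apply: forth_map Hk];
  by move=> x y /(IH _ _ _ Ha) /(bf_ren (@swap_last n)); rewrite !ext_env_swap.
Qed.

Fixpoint term_forget n (t : term (expand_lang L k) (subA A) n) : term L (subA A) n :=
  match t with
  | TVar i => TVar L (subA A) i
  | TPar p => TPar L n p
  | TApp f args => @TApp L (subA A) n f (fun i => term_forget (args i))
  end.

Lemma eval_term_forget n (e : 'I_n -> M) t :
  eval_term Nplus parA e t = eval_term N parA e (term_forget t).
Proof.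
elim: t => //= f args IH; congr (sfun N); exact: functional_extensionality.
Qed.

(* 1-equivalent tuples give the same colours to the values of L(A)-terms:
   a value in A is pinned down by the L(A)-type, and a value outside A can
   be added as a new coordinate, whose colours are then matched. *)
Lemma bf_colour n (e1 e2 : 'I_n -> M) (t : term L (subA A) n) j :
  bf 1 e1 e2 -> U j (eval_term N parA e1 t) -> U j (eval_term N parA e2 t).
Proof.
move=> [[H1 _] [Hf _]].
case: (classic (A (eval_term N parA e1 t))) => [Ha|Hna].
  by move/(_ (FEq t (TPar L n (exist _ _ Ha)))): H1 => /= [/(_ erefl) <-].
have [y _ [[Hy Hcol] _]] := Hf _ Hna.
pose chi := FEq (TVar L (subA A) (@ord_max n)) (term_ren (lift ord_max) t).
move/(_ chi): Hy; rewrite /= !eval_term_ren !ext_env_drop !ext_env_max.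
move=> [/(_ erefl) <-] _; have := Hcol ord_max j.
by rewrite !ext_env_max => -[].
Qed.

Lemma bf_invariant n (phi : formula (expand_lang L k) (subA A) n) :
  exists m, forall e1 e2 : 'I_n -> M, bf m e1 e2 ->
    sat Nplus parA phi e1 -> sat Nplus parA phi e2.
Proof.
elim: phi => {}n.
- move=> t1 t2; exists 0 => e1 e2 [[H1 _] _] /=; rewrite !eval_term_forget.
  exact: (proj1 (H1 (FEq (term_forget t1) (term_forget t2)))).
- case=> [r|j] args; last first.
    exists 1 => e1 e2 E /=; rewrite !eval_term_forget; exact: bf_colour.
  exists 0 => e1 e2 [[H1 _] _] /=.
  have Hargs (e : 'I_n -> M) : (fun i => eval_term Nplus parA e (args i))
      = (fun i => eval_term N parA e (term_forget (args i))).
    by apply: functional_extensionality => i; rewrite eval_term_forget.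
  rewrite !Hargs; exact: (proj1 (H1 (@FRel L _ n r (fun i => term_forget (args i))))).
- move=> psi [m IH]; exists m => e1 e2 E /= H1 H2.
  by apply/H1/(IH e2) => //; apply: bf_sym.
- move=> psi [m1 IH1] chi [m2 IH2]; exists (maxn m1 m2) => e1 e2 E /= [H1 H2].
  split; [apply: (IH1 e1) | apply: (IH2 e1)] => //; apply: bf_le E.
    exact: leq_maxl.
  exact: leq_maxr.
- move=> psi [m IH]; exists m.+1 => e1 e2 E /= [x Hx].
  case: (classic (A x)) => HA.
    by exists x; apply: (IH (ext_env e1 x)) => //; apply/bf_param/bf_mono.
  by case: E => _ [/(_ x HA) [y _ /IH Ey] _]; exists y; apply: Ey.
Qed.
End BackAndForth.

Section Coding.
Variables (L : language) (M : Type) (N : structure L M) (A : M -> Prop)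
          (k : nat) (U : 'I_k -> M -> Prop).

Local Notation T := (realized_types N A).

Definition outside n (e : 'I_n -> M) : Prop := forall i, ~ A (e i).

Lemma outside_ext n (e : 'I_n -> M) x : outside e -> ~ A x -> outside (ext_env e x).
Proof.
move=> He Hx i.
by case: (unliftP ord_max i) => [j ->|->]; rewrite ?ext_env_lift ?ext_env_max.
Qed.

Definition realized_tp n (e : 'I_n -> M) (He : outside e) : T :=
  exist _ (existT _ n (tp N e)) (ex_intro _ n (ex_intro _ e (conj He erefl))).

Definition tp_length (t : T) : nat := projT1 (sval t).

Definition const_tp d (Hd : ~ A d) n : T :=
  @realized_tp n (fun _ => d) (fun _ => Hd).

Definition type_code n (e : 'I_n -> M) : T -> Prop :=
  fun t => sval t = existT _ n (tp N e).

(* The colours of e as a set of lengths: U_j (e i) is recorded by the length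
   i * k + j + 2; the lengths 0 and 1 tell colour codes from type codes. *)
Definition colour_code n (e : 'I_n -> M) : T -> Prop :=
  fun t => tp_length t < 2 \/
           exists (i : 'I_n) (j : 'I_k), tp_length t = (i * k + j).+2 /\ U j (e i).

Fixpoint code m : forall n, ('I_n -> M) -> iterpow m.+2 T :=
  match m return forall n, ('I_n -> M) -> iterpow m.+2 T with
  | 0 => fun n e (S : T -> Prop) => S = type_code e \/ S = colour_code e
  | m'.+1 => fun n e (S : iterpow m'.+2 T) => exists2 x, ~ A x & S = @code m' _ (ext_env e x)
  end.
Arguments code m [n].

Lemma colour_code_index_inj i j i' j' : j < k -> j' < k ->
  i * k + j = i' * k + j' -> i = i' /\ j = j'.
Proof.
move=> Hj Hj' H; have k_gt0 : 0 < k by apply: leq_ltn_trans Hj.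
have := congr1 (divn^~ k) H; have := congr1 (modn^~ k) H.
by rewrite /= !modnMDl !modn_small // !divnMDl // !divn_small // !addn0.
Qed.

(* A colour code contains types of lengths 0 and 1, a type code does not. *)
Lemma colour_neq_type d n n' (e : 'I_n -> M) (e' : 'I_n' -> M) :
  ~ A d -> colour_code e <> type_code e'.
Proof.
move=> Hd HQ.
have h0 : type_code e' (const_tp Hd 0) by rewrite -HQ; left.
have h1 : type_code e' (const_tp Hd 1) by rewrite -HQ; left.
by move: (congr1 (@projT1 _ _) h0) (congr1 (@projT1 _ _) h1) => /= <-.
Qed.

Lemma code0_inj d n1 n2 (e1 : 'I_n1 -> M) (e2 : 'I_n2 -> M) : ~ A d ->
  code 0 e1 = code 0 e2 -> type_code e1 = type_code e2 /\ colour_code e1 = colour_code e2.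
Proof.
move=> Hd Hc.
have : code 0 e2 (type_code e1) by rewrite -Hc; left.
case=> [HP|HP]; last by case: (colour_neq_type Hd (esym HP)).
split=> //.
have : code 0 e2 (colour_code e1) by rewrite -Hc; right.
by case=> // /(colour_neq_type Hd).
Qed.

Lemma type_code_tp n1 n2 (e1 : 'I_n1 -> M) (e2 : 'I_n2 -> M) : outside e1 ->
  type_code e1 = type_code e2 ->
  existT (fun n => formula L (subA A) n -> Prop) n1 (tp N e1) = existT _ n2 (tp N e2).
Proof. by move=> D1 H; have : type_code e1 (realized_tp D1) by []; rewrite H. Qed.

Lemma colour_code_inj d n (e1 e2 : 'I_n -> M) : ~ A d ->
  colour_code e1 = colour_code e2 -> forall i j, U j (e1 i) -> U j (e2 i).
Proof.
move=> Hd HQ i j Hu.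
have : colour_code e2 (const_tp Hd (i * k + j).+2) by rewrite -HQ; right; exists i, j.
case=> [//|[i' [j' [/= [] /colour_code_index_inj Hij Hu']]]].
by have [/ord_inj -> /ord_inj ->] := Hij (ltn_ord j) (ltn_ord j').
Qed.

Lemma code_bf d m n (e1 e2 : 'I_n -> M) : ~ A d -> outside e1 -> outside e2 ->
  code m e1 = code m e2 -> bf N A U m e1 e2.
Proof.
elim: m n e1 e2 => [|m IH] n e1 e2 Hd D1 D2 Hc.
  have [/(type_code_tp D1) Htp Hcol] := code0_inj Hd Hc.
  have {}Htp := inj_pair2_eq_dec _ Nat.eq_dec _ _ _ _ Htp.
  split=> //; split=> [phi|i j].
    by have := congr1 (fun f => f phi) Htp; rewrite /tp => ->.
  by split; apply: colour_code_inj Hd _ i j; last apply: esym.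
have forth_code (f1 f2 : 'I_n -> M) : outside f1 -> outside f2 ->
    code m.+1 f1 = code m.+1 f2 -> forth A (fun g1 g2 => bf N A U m g1 g2) f1 f2.
  move=> F1 F2 Hf x Hx.
  have : code m.+1 f2 (code m (ext_env f1 x)) by rewrite -Hf; exists x.
  case=> y Hy /IH Hcy; exists y => //.
  exact: Hcy Hd (outside_ext F1 Hx) (outside_ext F2 Hy).
have Hforth := forth_code _ _ D1 D2 Hc.
split; [|split=> //].
- have [y _ /(bf_ren (lift ord_max)) /bf_base] := Hforth d Hd.
  by rewrite !ext_env_drop.
- by apply: forth_map (forth_code _ _ D2 D1 (esym Hc)) => x y /bf_sym.
Qed.

Lemma code_tp n1 n2 (a1 : 'I_n1 -> M) (a2 : 'I_n2 -> M) :
  outside a1 -> outside a2 -> (forall m, code m a1 = code m a2) ->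
  existT (fun n => formula (expand_lang L k) (subA A) n -> Prop) n1
    (tp (expand_struct N U) a1) = existT _ n2 (tp (expand_struct N U) a2).
Proof.
move=> D1 D2 Hc.
case: (classic (exists d, ~ A d)) => [[d Hd]|no_out]; last first.
  have nil_out n (a : 'I_n -> M) : outside a -> n = 0.
    by case: n a => [|n] a Da //; case: no_out; exists (a ord0).
  have En1 := nil_out _ _ D1; have En2 := nil_out _ _ D2; subst n1 n2.
  by have -> : a1 = a2 by apply: functional_extensionality => -[].
have [Htype _] := code0_inj Hd (Hc 0).
have En : n1 = n2 := congr1 (@projT1 _ _) (type_code_tp D1 Htype).
subst n2; congr existT; apply: functional_extensionality => phi.
apply: propositional_extensionality.
have [m Hm] := bf_invariant N U phi.
have E := code_bf Hd D1 D2 (Hc m).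
by split; apply: Hm; last apply: bf_sym.
Qed.
End Coding.
Arguments code [L M] N A [k] U m [n].

Lemma graph_inj (F : nat -> Type) (f g : forall m, F m.+2) :
  (fun z : {j & F j} => exists m, z = existT F m.+2 (f m)) =
  (fun z => exists m, z = existT F m.+2 (g m)) -> forall m, f m = g m.
Proof.
move=> H m.
have [m' Hm] : exists m', existT F m.+2 (f m) = existT F m'.+2 (g m').
  by move: (congr1 (fun P => P (existT F m.+2 (f m))) H) => /= <-; exists m.
have Em : m = m' by have := congr1 (@projT1 _ _) Hm => -[].
by subst m'; exact: inj_pair2_eq_dec _ Nat.eq_dec _ _ _ _ Hm.
Qed.

Theorem lemma4 (L : language) (M : Type) (N : structure L M) (A : M -> Prop)
    (k : nat) (U : 'I_k -> M -> Prop) :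
  card_le (realized_types (expand_struct N U) A)
          (beth_omega1 (realized_types N A)).
Proof.
have rep (t : realized_types (expand_struct N U) A) :
    {a : {n : nat & 'I_n -> M} | outside A (projT2 a) /\
       sval t = existT _ (projT1 a) (tp (expand_struct N U) (projT2 a))}.
  apply: constructive_indefinite_description.
  by case: (svalP t) => n [a [Ha ->]]; exists (existT _ n a).
exists (fun t z => exists m, z = existT _ m.+2 (code N A U m (projT2 (sval (rep t))))).
move=> t1 t2 /graph_inj Hcode; apply: eq_sig_hprop => [? ? ?|].
  exact: proof_irrelevance.
move: Hcode; case: (rep t1) (rep t2) => [[n1 a1] [D1 E1]] [[n2 a2] [D2 E2]] /= Hcode.
by rewrite E1 E2; exact: code_tp.
Qed.
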